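(* Let $q$ be a prime power and $1\le t_i\le t_o\le s$. If there exists a linear $(t_i,t_o,s,q)$-AONT, then there exists a linear $(t_i,t_o',s,q)$-AONT for every $t_o'$ with $t_o\le t_o'\le s$.
   Context: A linear $(t_i,t_o,s,q)$-AONT is given by an invertible $s\times s$ matrix $M$ over $\mathbb{F}_q$ defining the map $\mathbf{x}\mapsto\mathbf{y}=\mathbf{x}M^{-1}$ on row vectors of $\mathbb{F}_q^s$, such that for every set $I$ of $t_i$ input coordinates and every set $J$ of $s-t_o$ output coordinates, the pair $((x_i)_{i\in I},(y_j)_{j\in J})$ takes every value in $\mathbb{F}_q^{t_i+s-t_o}$ equally often as $\mathbf{x}$ ranges over $\mathbb{F}_q^s$. Equivalently, $M$ is invertible and every $t_o\times t_i$ submatrix of $M$ has rank $t_i$. *)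

From HB Require Import structures.
From mathcomp Require Import all_boot all_order all_algebra all_field.
Set Implicit Arguments. Unset Strict Implicit. Unset Printing Implicit Defensive.
Import GRing.Theory.
Local Open Scope ring_scope.

Definition submx_set (F : fieldType) (s : nat) (M : 'M[F]_s)
  (R C : {set 'I_s}) : 'M[F]_(#|R|, #|C|) :=
  \matrix_(i < #|R|, j < #|C|) M (enum_val i) (enum_val j).

(* A linear (ti, to, s, q)-AONT over the field F (q = #|F|) is given by an
   invertible s x s matrix M such that every to x ti submatrix has rank ti.
   Rows of M index outputs, columns index inputs (x = y M). *)
Definition linear_AONT (F : fieldType) (ti to s : nat) (M : 'M[F]_s) : Prop :=
  M \in unitmx /\
  forall R C : {set 'I_s}, #|R| = to -> #|C| = ti ->
    \rank (submx_set M R C) = ti.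

From HB Require Import structures.
From mathcomp Require Import all_boot all_order all_algebra all_field.

Set Implicit Arguments.
Unset Strict Implicit.
Unset Printing Implicit Defensive.

(* The same matrix works: a to' x ti submatrix contains, on any to of its
   rows, a to x ti submatrix of rank ti, while its rank is at most its number
   ti of columns. *)

Lemma subset_of_card (T : finType) (A : {set T}) (n : nat) :
  (n <= #|A|)%N -> exists2 B : {set T}, B \subset A & #|B| = n.
Proof.
move=> le_nA; exists [set x in take n (enum A)].
  by apply/subsetP=> x; rewrite inE => /mem_take; rewrite mem_enum.
rewrite cardsE; move/card_uniqP: (take_uniq n (enum_uniq (mem A))) ->.
by rewrite size_take -cardE; case: ltngtP le_nA.
Qed.

Lemma submx_set_subset (F : fieldType) (s : nat) (M : 'M[F]_s)
    (R R' C : {set 'I_s}) :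
  R \subset R' -> (submx_set M R C <= submx_set M R' C)%MS.
Proof.
move=> sRR'; apply/row_subP=> i.
have R'i : enum_val i \in R' by apply: (subsetP sRR'); apply: enum_valP.
suff -> : row i (submx_set M R C) = row (enum_rank_in R'i (enum_val i))
                                        (submx_set M R' C) by apply: row_sub.
by apply/rowP=> j; rewrite !mxE enum_rankK_in.
Qed.

Lemma linear_AONT_widen_out (F : fieldType) (ti to to' s : nat) (M : 'M[F]_s) :
  (to <= to')%N -> linear_AONT ti to M -> linear_AONT ti to' M.
Proof.
move=> le_to_to' [unitM rankM]; split=> // R' C cardR' cardC.
have [R sRR' cardR] : exists2 R : {set 'I_s}, R \subset R' & #|R| = to.
  by apply: subset_of_card; rewrite cardR'.
apply/eqP; rewrite eqn_leq -{1}cardC rank_leq_col /=.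
by rewrite -(rankM R C cardR cardC) mxrankS ?submx_set_subset.
Qed.

Theorem mainTheorem8 (F : finFieldType) (ti to s : nat) :
  (1 <= ti)%N -> (ti <= to)%N -> (to <= s)%N ->
  (exists M : 'M[F]_s, linear_AONT ti to M) ->
  forall to' : nat, (to <= to')%N -> (to' <= s)%N ->
    exists M' : 'M[F]_s, linear_AONT ti to' M'.
Proof.
move=> _ _ _ [M aontM] to' le_to_to' _.
by exists M; apply: linear_AONT_widen_out aontM.
Qed.
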